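(* Let $i\ge 2$ and let $c_0,\dots,c_{i-1}$ be the vertices of a cycle (in this cyclic order), each with a positive weight $w(c_j)$, and let $W=\sum_j w(c_j)$. Run the following procedure (BalanceInCycle): initialize $b_{OPT}\gets 0$, a queue $Q_1$ empty and a queue $Q_2$ containing $c_0,c_1,\dots,c_{i-1}$ in this order (head $c_0$). Repeat the following iteration until $c_0$ becomes the head of $Q_1$ for the second time: update $b_{OPT}\gets\max\{b_{OPT},\min(w(Q_1),w(Q_2))\}$; then, if $w(Q_1)>w(Q_2)$, dequeue the head of $Q_1$ and append it to the tail of $Q_2$, otherwise dequeue the head of $Q_2$ and append it to the tail of $Q_1$. Then the procedure finds the most balanced cut of the cycle, i.e. at termination $b_{OPT}$ equals $\max_J \min\{w(J),W-w(J)\}$, where $J$ ranges over all non-empty proper subsets of $\{c_0,\dots,c_{i-1}\}$ that are contiguous in the cyclic order (equivalently, over all cuts of the cycle consisting of two distinct cycle edges) and $w(J)=\sum_{c\in J}w(c)$.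
   Context: $w(Q)$ denotes the sum of the weights of the elements currently in queue $Q$. Queues are FIFO. In the paper's application, the cycle is a cycle of the cactus representation of all minimum cuts of a graph $G$ with $n$ vertices (so $W=n$), $w(c_j)$ is the number of vertices of $G$ represented in the sub-cactus hanging off $c_j$, each pair of cycle edges gives a minimum cut of $G$, and the balance of a cut is the number of vertices of $G$ on its lighter side. *)

From mathcomp Require Import all_boot all_order all_algebra.
Set Implicit Arguments. Unset Strict Implicit. Unset Printing Implicit Defensive.
Import Order.TTheory GRing.Theory Num.Theory.
Local Open Scope ring_scope.

(* Cycle vertices c_0,...,c_{i-1} are represented by the naturals 0,...,i-1;
   the weight function is w : nat -> R (only its values on 0..i-1 matter). *)

Section Balance.
Variable R : realDomainType.
Variable w : nat -> R.

Definition qweight (q : seq nat) : R := \sum_(x <- q) w x.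

(* State of BalanceInCycle: Q1, Q2 (heads at the front of the lists),
   b_OPT, and the number of times c_0 has become the head of Q1. *)
Record bstate := BState { Q1 : seq nat; Q2 : seq nat; bopt : R; cnt0 : nat }.

Definition init_state (i : nat) : bstate := BState [::] (iota 0 i) 0 0.

Definition bstep (s : bstate) : bstate :=
  let q1 := Q1 s in let q2 := Q2 s in
  let b' := Num.max (bopt s) (Num.min (qweight q1) (qweight q2)) in
  let '(q1', q2') :=
    if qweight q1 > qweight q2 then (behead q1, rcons q2 (head 0%N q1))
    else (rcons q1 (head 0%N q2), behead q2) in
  let became := (ohead q1' == Some 0%N) && (ohead q1 != Some 0%N) in
  BState q1' q2' b' (cnt0 s + became).

(* Run the loop with the given fuel: the termination test (c_0 has become the
   head of Q1 for the second time) is performed before each iteration. *)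
Fixpoint brun (fuel : nat) (s : bstate) : option R :=
  match fuel with
  | 0 => None
  | f.+1 => if (2 <= cnt0 s)%N then Some (bopt s) else brun f (bstep s)
  end.

Definition BalanceInCycle (i fuel : nat) : option R := brun fuel (init_state i).

Definition arc_weight (i a l : nat) : R := \sum_(k < l) w ((a + k) %% i).

Definition total_weight (i : nat) : R := \sum_(j < i) w j.

Definition arc_balance (i a l : nat) : R :=
  Num.min (arc_weight i a l) (total_weight i - arc_weight i a l).

End Balance.

From mathcomp Require Import all_boot all_order all_algebra.
From mathcomp Require Import zify lra.
Set Implicit Arguments. Unset Strict Implicit. Unset Printing Implicit Defensive.
Import Order.TTheory GRing.Theory Num.Theory.
Local Open Scope ring_scope.

(* Throughout the run, Q1 holds the cyclic arc c_s, ..., c_{s+n-1} and Q2 its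
   complement, with s, n <= i.  An iteration either advances the start of Q1,
   (s, n) -> (s+1, n-1), when Q1 is the heavier side, or its end,
   (s, n) -> (s, n+1).  So 2s + n grows by one per iteration, and the loop stops
   when s = i and n > 0, after at most 3i iterations.

   The balance of a cut is the weight of its lighter arc, so it suffices that
   b_OPT finally bounds every light arc (one no heavier than its complement).
   Call an arc behind Q1 if it starts before s or ends before s + n: it can never
   be Q1 again.  Every light arc behind Q1 is bounded by b_OPT.  When the end
   advances, Q1 is light, its weight is recorded in b_OPT, and it contains every
   arc that becomes behind.  When the start advances, Q1 is heavy, and the arcs
   that become behind start at c_s and contain Q1, so they are heavy as well.
   At the end s = i, and every arc is behind. *)

Section Arcs.
Variables (R : realDomainType) (w : nat -> R) (i : nat).

Local Notation arc := (arc_weight w i).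
Local Notation W := (total_weight w i).

Lemma arc_weight0 a : arc a 0 = 0.
Proof. exact: big_ord0. Qed.

Lemma arc_weightD a l m : arc a (l + m)%N = arc a l + arc (a + l)%N m.
Proof.
rewrite /arc_weight big_split_ord /=; congr (_ + _).
by apply: eq_bigr => k _; rewrite addnA.
Qed.

Lemma arc_weight1 a : arc a 1 = w (a %% i).
Proof. by rewrite /arc_weight big_ord1 addn0. Qed.

Lemma arc_weight_mod a l : arc (a %% i) l = arc a l.
Proof. by apply: eq_bigr => k _; rewrite modnDml. Qed.

Lemma arc_weight_full a : arc a i = W.
Proof.
elim: a => [|a IH].
  by apply: eq_bigr => k _; rewrite add0n modn_small.
have := arc_weightD a 1 i; rewrite addnC arc_weightD.
rewrite IH !arc_weight1 modnDr addn1 => h.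
by apply: (addrI (w (a %% i))); rewrite -h addrC.
Qed.

Lemma arc_weight_compl a l : (l <= i)%N -> W - arc a l = arc (a + l)%N (i - l)%N.
Proof.
move=> li; have := arc_weightD a l (i - l); rewrite subnKC // arc_weight_full => ->.
by rewrite addrC addKr.
Qed.

Lemma arc_balanceE a l : (l <= i)%N ->
  arc_balance w i a l = Num.min (arc a l) (arc (a + l)%N (i - l)%N).
Proof. by move=> li; rewrite /arc_balance arc_weight_compl. Qed.

Lemma arc_balance_mod a l : arc_balance w i (a %% i) l = arc_balance w i a l.
Proof. by rewrite /arc_balance arc_weight_mod. Qed.

Lemma arc_balance_gt0_proper a l : (l <= i)%N -> 0 < arc_balance w i a l -> (0 < l < i)%N.
Proof.
move=> li; rewrite arc_balanceE // lt_min => /andP[pos cpos].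
rewrite lt0n ltn_neqAle li andbT; apply/andP; split; apply/eqP => e.
- by move: pos; rewrite e arc_weight0 ltxx.
- by move: cpos; rewrite e subnn arc_weight0 ltxx.
Qed.

Definition arc_seq a l : seq nat := map (modn^~ i) (iota a l).

Lemma arc_seqSr a l : arc_seq a l.+1 = rcons (arc_seq a l) ((a + l) %% i)%N.
Proof. by rewrite /arc_seq -addn1 iotaD map_cat cats1. Qed.

Lemma arc_seqS a l : arc_seq a l.+1 = (a %% i)%N :: arc_seq a.+1 l.
Proof. by []. Qed.

Lemma qweight_arc_seq a l : qweight w (arc_seq a l) = arc a l.
Proof.
elim: l a => [|l IH] a; first by rewrite /qweight big_nil arc_weight0.
by rewrite /qweight big_cons -/(qweight _ _) IH -[l.+1]add1n arc_weightD arc_weight1 addn1.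
Qed.

Lemma ohead_arc_seq_eq0 a l :
  (ohead (arc_seq a l) == Some 0%N) = (0 < l)%N && (a %% i == 0)%N.
Proof. by case: l. Qed.

Lemma modn_eq0_le a : (a <= i)%N -> (a %% i == 0)%N = (a == 0)%N || (a == i).
Proof.
move=> ai; case: (ltngtP a i) ai => // [a_lt|->] _; last by rewrite modnn eqxx orbT.
by rewrite modn_small // orbF.
Qed.

(* The value of [cnt0] once Q1 = c_s, ..., c_{s+n-1} with s <= i: c_0 became the
   head of Q1 when the first vertex entered it, and becomes it again when Q1 has
   moved all the way round to start at c_i = c_0. *)
Definition head0_count s n : nat := ((0 < s + n) + ((s == i) && (0 < n)))%N.

Definition arc_state s n (b : R) : bstate R :=
  BState (arc_seq s n) (arc_seq (s + n)%N (i - n)%N) b (head0_count s n).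

Lemma init_state_arc_state : init_state R i = arc_state 0 0 0.
Proof.
rewrite /init_state /arc_state /arc_seq /head0_count /= subn0 andbF; congr BState.
by apply/esym/map_id_in => x; rewrite mem_iota => /andP[_ xi]; rewrite modn_small.
Qed.

Lemma bstep_shrink s n b : (s < i)%N -> (0 < n <= i)%N ->
    arc (s + n)%N (i - n)%N < arc s n ->
  bstep w (arc_state s n b) = arc_state s.+1 n.-1 (Num.max b (arc_balance w i s n)).
Proof.
case: n => // n si /= ni heavy.
rewrite /bstep /= !qweight_arc_seq heavy arc_balanceE // -/(arc_seq s.+1 n).
rewrite /arc_state -(subnSK ni) arc_seqSr addSnnS -addnA subnKC // modnDr.
rewrite /head0_count ohead_arc_seq_eq0 modn_eq0_le // (modn_small si) /=.
congr BState; rewrite (inj_eq (@Some_inj _)).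
by clear heavy; lia.
Qed.

Lemma bstep_extend s n b : (s <= i)%N -> (n < i)%N -> ~~ ((s == i) && (0 < n)%N) ->
    arc s n <= arc (s + n)%N (i - n)%N ->
  bstep w (arc_state s n b) = arc_state s n.+1 (Num.max b (arc_balance w i s n)).
Proof.
move=> si ni running light.
rewrite /bstep /= !qweight_arc_seq ltNge light /= (arc_balanceE _ (ltnW ni)).
have -> : arc_seq (s + n)%N (i - n)%N = ((s + n) %% i)%N :: arc_seq (s + n.+1)%N (i - n.+1)%N.
  by rewrite -(subnSK ni) arc_seqS addnS.
rewrite /= -arc_seqSr /arc_state /head0_count !ohead_arc_seq_eq0 !modn_eq0_le //.
by congr BState; clear light; lia.
Qed.

Lemma brun_arc_state fuel s n b :
  brun w fuel.+1 (arc_state s n b) =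
  if (s == i) && (0 < n)%N then Some b else brun w fuel (bstep w (arc_state s n b)).
Proof.
have stop : (2 <= head0_count s n)%N = (s == i) && (0 < n)%N by rewrite /head0_count; lia.
by rewrite /= stop.
Qed.

End Arcs.

Section PositiveWeights.
Variables (R : realDomainType) (w : nat -> R) (i : nat).
Hypothesis i_gt0 : (0 < i)%N.
Hypothesis w_gt0 : forall j, (j < i)%N -> 0 < w j.

Local Notation arc := (arc_weight w i).

Lemma arc_weight_ge0 a l : 0 <= arc a l.
Proof. by apply: sumr_ge0 => k _; apply/ltW/w_gt0; rewrite ltn_pmod. Qed.

Lemma arc_weight_gt0 a l : (0 < l)%N -> 0 < arc a l.
Proof.
case: l => // l _; rewrite -add1n arc_weightD arc_weight1.
by apply: ltr_wpDr (arc_weight_ge0 _ _) (w_gt0 (ltn_pmod _ i_gt0)).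
Qed.

Lemma arc_weight_subarc s n a l : (s <= a)%N -> (a + l <= s + n)%N -> arc a l <= arc s n.
Proof.
move=> sa al; have -> : n = ((a - s) + (l + (s + n - (a + l))))%N by lia.
rewrite arc_weightD arc_weightD subnKC //.
have := arc_weight_ge0 s (a - s); have := arc_weight_ge0 (a + l) (s + n - (a + l)).
lra.
Qed.

Definition light_arc a l : bool := arc a l <= arc (a + l)%N (i - l)%N.

Lemma light_arc_mod a l : light_arc (a %% i) l = light_arc a l.
Proof. by rewrite /light_arc -(arc_weight_mod _ _ (_ + l)) modnDml !arc_weight_mod. Qed.

Definition light_bounded b :=
  forall a l, (a < i)%N -> (l <= i)%N -> light_arc a l -> arc a l <= b.

Lemma arc_balance_le_light b : light_bounded b ->
  forall a l, (l <= i)%N -> arc_balance w i a l <= b.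
Proof.
move=> hb a l li; rewrite arc_balanceE // ge_min.
have [la | heavy] := boolP (light_arc a l).
  by apply/orP; left; rewrite -arc_weight_mod hb ?ltn_pmod ?light_arc_mod.
apply/orP; right; rewrite -arc_weight_mod; apply: hb; rewrite ?ltn_pmod ?leq_subr //.
rewrite light_arc_mod /light_arc -addnA subnKC // subKn // -(arc_weight_mod _ _ (_ + i)) modnDr.
by rewrite arc_weight_mod ltW // ltNge.
Qed.

Definition is_arc_balance b :=
  exists a l, [/\ (a < i)%N, (l <= i)%N & b = arc_balance w i a l].

Definition behind_bounded s n b := forall a l, (l <= i)%N -> light_arc a l ->
  ((a < s) || (a + l < s + n))%N -> arc a l <= b.

Definition loop_inv s n b :=
  [/\ (s <= i)%N, (n <= i)%N, is_arc_balance b & behind_bounded s n b].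

Lemma loop_inv_init : loop_inv 0 0 0.
Proof.
split=> //; exists 0%N, 0%N; split=> //; rewrite arc_balanceE // arc_weight0.
by apply/esym/min_idPl; apply: arc_weight_ge0.
Qed.

Lemma is_arc_balance_max b s n : is_arc_balance b -> (n <= i)%N ->
  is_arc_balance (Num.max b (arc_balance w i s n)).
Proof.
move=> [a [l [ai li ->]]] ni; rewrite maxEle; case: ifP => _; last by exists a, l.
by exists (s %% i)%N, n; rewrite arc_balance_mod ltn_pmod.
Qed.

Lemma behind_bounded_shrink s n b : (0 < n <= i)%N ->
    arc (s + n)%N (i - n)%N < arc s n -> behind_bounded s n b ->
  behind_bounded s.+1 n.-1 (Num.max b (arc_balance w i s n)).
Proof.
move=> /andP[n0 ni] heavy hb a l li la behind.
have [old | fresh] := boolP ((a < s) || (a + l < s + n))%N; first by rewrite le_max hb.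
have [as_eq ln] : a = s /\ (n <= l)%N by lia.
subst a.
suff : arc (s + l)%N (i - l)%N < arc s l by move: la; rewrite /light_arc leNgt => /negbTE ->.
by apply: le_lt_trans (arc_weight_subarc _ _) (lt_le_trans heavy (arc_weight_subarc _ _)); lia.
Qed.

Lemma behind_bounded_extend s n b : (n <= i)%N -> light_arc s n ->
    behind_bounded s n b ->
  behind_bounded s n.+1 (Num.max b (arc_balance w i s n)).
Proof.
move=> ni ls hb a l li la behind.
have [old | fresh] := boolP ((a < s) || (a + l < s + n))%N; first by rewrite le_max hb.
rewrite le_max; apply/orP; right; rewrite arc_balanceE // (min_idPl ls).
by apply: arc_weight_subarc; lia.
Qed.

Lemma loop_inv_step s n b : loop_inv s n b -> ~~ ((s == i) && (0 < n)%N) ->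
  let b' := Num.max b (arc_balance w i s n) in
  exists s' n', [/\ bstep w (arc_state i s n b) = arc_state i s' n' b',
    loop_inv s' n' b' & (s' + s' + n' = (s + s + n).+1)%N].
Proof.
case=> si ni ach hb running b'; have ach' := is_arc_balance_max s ach ni.
have [heavy | light] := ltP (arc (s + n)%N (i - n)%N) (arc s n).
  have n0 : (0 < n)%N.
    by apply: contraTT heavy; rewrite -eqn0Ngt => /eqP->; rewrite arc_weight0 -leNgt arc_weight_ge0.
  have si' : (s < i)%N by lia.
  exists s.+1, n.-1; rewrite bstep_shrink ?n0 //; split=> //; last by lia.
  by split; [lia | lia | done | apply: behind_bounded_shrink; rewrite ?n0 ?ni].
have ni' : (n < i)%N.
  rewrite ltn_neqAle ni andbT; apply/negP => /eqP en; move: light.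
  by rewrite en subnn arc_weight0 leNgt arc_weight_gt0.
exists s, n.+1; rewrite bstep_extend //; split=> //; last by lia.
by split=> //; apply: behind_bounded_extend.
Qed.

Lemma loop_inv_stop n b : loop_inv i n b -> is_arc_balance b /\ light_bounded b.
Proof. by case=> _ _ ach hb; split=> // a l ai li la; apply: hb => //; rewrite ai. Qed.

Lemma brun_loop k s n b : loop_inv s n b -> (3 * i <= s + s + n + k)%N ->
  exists fuel b',
    brun w fuel (arc_state i s n b) = Some b' /\ is_arc_balance b' /\ light_bounded b'.
Proof.
elim: k s n b => [|k IH] s n b inv bound.
all: have [/andP[/eqP s_eq n0] | running] := boolP ((s == i) && (0 < n)%N).
1,3: exists 1%N, b; rewrite brun_arc_state s_eq eqxx n0; split=> //.
1,2: by rewrite s_eq in inv; apply: loop_inv_stop inv.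
  by case: inv => si ni _ _; lia.
have [s' [n' [step inv' grow]]] := loop_inv_step inv running.
have [|fuel [b' [run res]]] := IH s' n' _ inv'; first by lia.
by exists fuel.+1, b'; rewrite brun_arc_state (negbTE running) step.
Qed.

Lemma BalanceInCycle_terminates : exists fuel b,
  BalanceInCycle w i fuel = Some b /\ is_arc_balance b /\ light_bounded b.
Proof.
have [|fuel [b res]] := @brun_loop (3 * i)%N 0 0 0 loop_inv_init; first by lia.
by exists fuel, b; rewrite /BalanceInCycle init_state_arc_state.
Qed.

End PositiveWeights.

Theorem lemma5 (R : realDomainType) (i : nat) (w : nat -> R) :
  (2 <= i)%N ->
  (forall j, (j < i)%N -> 0 < w j) ->
  exists fuel b,
    BalanceInCycle w i fuel = Some b /\
    (exists a l, [/\ (a < i)%N, (0 < l)%N, (l < i)%N & b = arc_balance w i a l]) /\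
    (forall a l, (a < i)%N -> (0 < l)%N -> (l < i)%N -> arc_balance w i a l <= b).
Proof.
move=> i_ge2 w_gt0; have i_gt0 : (0 < i)%N := ltnW i_ge2.
have [fuel [b [run [[a [l [ai li opt_eq]]] bounded]]]] :=
  BalanceInCycle_terminates i_gt0 w_gt0.
have le_opt := arc_balance_le_light i_gt0 bounded.
exists fuel, b; split=> //; split=> [|a' l' _ _ /ltnW]; last exact: le_opt.
have opt_gt0 : 0 < b.
  apply: lt_le_trans (le_opt 0%N 1%N (ltnW i_ge2)).
  rewrite arc_balanceE; last exact: ltnW.
  by rewrite lt_min !arc_weight_gt0 ?subn_gt0.
rewrite opt_eq in opt_gt0.
by have /andP[l_gt0 l_lt] := arc_balance_gt0_proper li opt_gt0; exists a, l.
Qed.
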